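(* Let $\mathbf v\in\mathbb Z^4$ be nonzero and $\mathcal A[\mathbf v]=\{\mathbf U\mathbf v:\mathbf U\in\mathcal A\}$. (1) If $\mathcal A[\mathbf v]$ contains an exceptional quadruple, then it contains elements $\mathbf v_1,\mathbf v_2$ with $L(\mathbf v_1)>0$ and $L(\mathbf v_2)<0$. (2) There exist orbits $\mathcal A[\mathbf v]$ containing more than one exceptional quadruple. (3) Exceptional quadruples $\mathbf a$ with $Q_{\mathcal D}(\mathbf a)=k$ exist only for $k\ge1$; for each $k\ge1$ there are only finitely many exceptional quadruples $\mathbf a$ with $Q_{\mathcal D}(\mathbf a)=k$, and all satisfy $H(\mathbf a)^2\le 2k^2$.
   Context: $Q_{\mathcal D}(a,b,c,d)=2(a^2+b^2+c^2+d^2)-(a+b+c+d)^2$; $H(\mathbf a)=(a^2+b^2+c^2+d^2)^{1/2}$; $L(\mathbf a)=a+b+c+d$; $|\mathbf a|=|a|+|b|+|c|+|d|$. $\mathbf S_i$ ($i=1,\dots,4$) is the integer matrix replacing the $i$-th coordinate $a_i$ of a quadruple by $2\sum_{j\ne i}a_j-a_i$, other coordinates fixed; the Apollonian group $\mathcal A$ is the subgroup of $GL(4,\mathbb Z)$ they generate. An integer quadruple is reduced if no $\mathbf S_i$ strictly decreases $|\cdot|$. A reduced quadruple ordered as $a\le b\le c\le d$ with $L\ge0$ is exceptional if $a+b+c\le 0<d$ (and a root quadruple if $a+b+c\ge d>0$); a reduced quadruple with $L<0$ is exceptional iff $(-d,-c,-b,-a)$ is. *)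

From mathcomp Require Import all_boot all_order all_algebra.
Set Implicit Arguments. Unset Strict Implicit. Unset Printing Implicit Defensive.
Import Order.TTheory GRing.Theory Num.Theory.
Local Open Scope ring_scope.

Definition quad := 'cV[int]_4.

Definition QD (a : quad) : int :=
  2 * (\sum_(i < 4) (a i 0) ^+ 2) - (\sum_(i < 4) a i 0) ^+ 2.

Definition Hsq (a : quad) : int := \sum_(i < 4) (a i 0) ^+ 2.

Definition Lsum (a : quad) : int := \sum_(i < 4) a i 0.

Definition norm1 (a : quad) : int := \sum_(i < 4) `|a i 0|.

(* S_i : replaces a_i by 2 * sum_{j <> i} a_j - a_i, other coordinates fixed *)
Definition Smx (i : 'I_4) : 'M[int]_4 :=
  \matrix_(r, c) (if r == i then (if c == i then -1 else 2)
                  else (r == c)%:R).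

Inductive apollonian : 'M[int]_4 -> Prop :=
| apollonian1 : apollonian 1%:M
| apollonianS i : apollonian (Smx i)
| apollonianM U V : apollonian U -> apollonian V -> apollonian (U *m V)
| apollonianV U : apollonian U -> apollonian (invmx U).

Definition in_Aorbit (v w : quad) : Prop :=
  exists U, apollonian U /\ w = U *m v.

Definition reduced (a : quad) : Prop :=
  forall i : 'I_4, ~ (norm1 (Smx i *m a) < norm1 a).

Definition sorted_coords (a : quad) : seq int :=
  sort (fun x y : int => x <= y) [seq a i 0 | i <- enum 'I_4].

Definition exceptional_nonneg (a : quad) : Prop :=
  let s := sorted_coords a in
  reduced a /\ 0 <= Lsum a /\ s`_0 + s`_1 + s`_2 <= 0 /\ 0 < s`_3.

(* general case: for L < 0, a is exceptional iff (-d,-c,-b,-a) is,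
   i.e. iff the negated quadruple (same multiset as (-d,-c,-b,-a)) is *)
Definition exceptional (a : quad) : Prop :=
  if 0 <= Lsum a then exceptional_nonneg a
  else reduced a /\ exceptional_nonneg (- a).

(* For an exceptional quadruple with L >= 0 let d be its largest coordinate;
   a + b + c <= 0 < d gives 0 <= L <= d.  Since L(S_i a) = 3L - 4 a_i, the
   move at d makes L negative, and the move at any coordinate a_i < 3L/4
   (one exists since L >= 0 and a <> 0) makes it positive; this is (1).
   Also L^2 <= d^2 <= H^2, so Q_D = 2H^2 - L^2 >= H^2 >= 1, which bounds
   every coordinate by Q_D and gives (3).  Negation preserves Q_D and H and
   reduces the case L < 0 to L > 0.  Reducedness is needed only for (2),
   witnessed by the exceptional pair (-1,-1,0,1) and
   S_1 (-1,-1,0,1) = (1,-1,0,1). *)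

From mathcomp Require Import all_boot all_order all_algebra.
From mathcomp Require Import zify ring.
Import Order.TTheory GRing.Theory Num.Theory.
Local Open Scope ring_scope.

Definition o0 : 'I_4 := @Ordinal 4 0 isT.
Definition o1 : 'I_4 := @Ordinal 4 1 isT.
Definition o2 : 'I_4 := @Ordinal 4 2 isT.
Definition o3 : 'I_4 := @Ordinal 4 3 isT.

Lemma ord4P (P : 'I_4 -> Prop) : P o0 -> P o1 -> P o2 -> P o3 -> forall i, P i.
Proof.
move=> P0 P1 P2 P3 [[|[|[|[|//]]]] lt_i4].
- by rewrite (_ : Ordinal lt_i4 = o0) //; apply: val_inj.
- by rewrite (_ : Ordinal lt_i4 = o1) //; apply: val_inj.
- by rewrite (_ : Ordinal lt_i4 = o2) //; apply: val_inj.
- by rewrite (_ : Ordinal lt_i4 = o3) //; apply: val_inj.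
Qed.

Lemma enum_ord4 : enum 'I_4 = [:: o0; o1; o2; o3].
Proof. by apply: (inj_map val_inj); rewrite val_enum_ord. Qed.

Lemma big_ord4 (R : nmodType) (F : 'I_4 -> R) :
  \sum_(i < 4) F i = F o0 + F o1 + F o2 + F o3.
Proof.
rewrite !big_ord_recl big_ord0 addr0 !addrA.
by congr (_ + _ + _ + _); congr F; apply: val_inj.
Qed.

Lemma Lsum4 (a : quad) : Lsum a = a o0 0 + a o1 0 + a o2 0 + a o3 0.
Proof. exact: big_ord4. Qed.

Lemma QD_Hsq_Lsum (a : quad) : QD a = 2 * Hsq a - Lsum a ^+ 2.
Proof. by []. Qed.

Lemma sqr_coord_le_Hsq (a : quad) i : a i 0 ^+ 2 <= Hsq a.
Proof.
rewrite /Hsq (bigD1 i) //= lerDl.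
by apply: sumr_ge0 => j _; apply: sqr_ge0.
Qed.

Lemma norm_coord_le_Hsq (a : quad) i : `|a i 0| <= Hsq a.
Proof.
apply: le_trans (sqr_coord_le_Hsq a i); rewrite expr2.
by have [x_le0|x_gt0] := lerP (a i 0) 0; nia.
Qed.

Lemma LsumN (a : quad) : Lsum (- a) = - Lsum a.
Proof. by rewrite /Lsum; under eq_bigr do rewrite mxE; rewrite sumrN. Qed.

Lemma HsqN (a : quad) : Hsq (- a) = Hsq a.
Proof. by rewrite /Hsq; under eq_bigr do rewrite mxE sqrrN. Qed.

Lemma QDN (a : quad) : QD (- a) = QD a.
Proof. by rewrite !QD_Hsq_Lsum HsqN LsumN sqrrN. Qed.

Lemma SmxE i (a : quad) r :
  (Smx i *m a) r 0 = if r == i then 2 * Lsum a - 3 * a i 0 else a r 0.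
Proof.
rewrite mxE /Lsum (bigD1 i) //= [in RHS](bigD1 i) //= !mxE eqxx.
case: eqP => [->|/eqP r_neq_i].
  under eq_bigr => c /negbTE c_neq_i do rewrite mxE eqxx c_neq_i.
  by rewrite -mulr_sumr; ring.
rewrite mul0r add0r (bigD1 r) /=; last by rewrite r_neq_i.
rewrite mxE (negbTE r_neq_i) eqxx mul1r big1 ?addr0 // => c /andP[_ c_neq_r].
by rewrite mxE (negbTE r_neq_i) eq_sym (negbTE c_neq_r) mul0r.
Qed.

Lemma Lsum_Smx i (a : quad) : Lsum (Smx i *m a) = 3 * Lsum a - 4 * a i 0.
Proof.
have Lsum_split : Lsum a = a i 0 + \sum_(r < 4 | r != i) a r 0.
  by rewrite /Lsum (bigD1 i).
rewrite {1}/Lsum (bigD1 i) //= SmxE eqxx.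
under eq_bigr => r r_neq_i do rewrite SmxE (negbTE r_neq_i).
by rewrite Lsum_split; ring.
Qed.

Lemma norm1_Smx i (a : quad) :
  norm1 (Smx i *m a) = norm1 a - `|a i 0| + `|2 * Lsum a - 3 * a i 0|.
Proof.
have norm1_split : norm1 a = `|a i 0| + \sum_(r < 4 | r != i) `|a r 0|.
  by rewrite /norm1 (bigD1 i).
rewrite {1}/norm1 (bigD1 i) //= SmxE eqxx.
under eq_bigr => r r_neq_i do rewrite SmxE (negbTE r_neq_i).
by rewrite norm1_split; ring.
Qed.

Lemma reducedP (a : quad) :
  reduced a <-> forall i, `|a i 0| <= `|2 * Lsum a - 3 * a i 0|.
Proof. by split=> red i; have := red i; rewrite ?norm1_Smx; lia. Qed.

Lemma in_Aorbit_refl v : in_Aorbit v v.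
Proof. by exists 1%:M; split; [exact: apollonian1 | rewrite mul1mx]. Qed.

Lemma in_Aorbit_Smx v w i : in_Aorbit v w -> in_Aorbit v (Smx i *m w).
Proof.
case=> U [AU ->]; exists (Smx i *m U); split; last by rewrite mulmxA.
exact: apollonianM (apollonianS i) AU.
Qed.

Lemma exceptional_nonneg_top (u : quad) : exceptional_nonneg u ->
  exists2 i, 0 < u i 0 & 0 <= Lsum u <= u i 0.
Proof.
case=> _ [L_ge0 [low_le0 top_gt0]].
have perm_s : perm_eq (sorted_coords u) [seq u i 0 | i <- enum 'I_4].
  exact/permEl/perm_sort.
have Lsum_s : Lsum u = \sum_(x <- sorted_coords u) x.
  by rewrite (perm_big _ perm_s) big_map big_enum.
have size_s : size (sorted_coords u) = 4%N.
  by rewrite (perm_size perm_s) size_map size_enum_ord.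
have /mapP[i _ top_eq] : (sorted_coords u)`_3 \in [seq u i 0 | i <- enum 'I_4].
  by rewrite -(perm_mem perm_s) mem_nth ?size_s.
exists i; first by rewrite -top_eq.
move: Lsum_s low_le0 top_eq size_s.
case: (sorted_coords u) => [|y0 [|y1 [|y2 [|y3 [|? ?]]]]] //=.
rewrite !big_cons big_nil; lia.
Qed.

Lemma exists_coord_lt_3Lsum_div4 (a : quad) i : a i 0 != 0 -> 0 <= Lsum a ->
  exists j, 4 * a j 0 < 3 * Lsum a.
Proof.
move=> ai_nz L_ge0.
have [a0|a0] := ltrP (4 * a o0 0) (3 * Lsum a); first by exists o0.
have [a1|a1] := ltrP (4 * a o1 0) (3 * Lsum a); first by exists o1.
have [a2|a2] := ltrP (4 * a o2 0) (3 * Lsum a); first by exists o2.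
have [a3|a3] := ltrP (4 * a o3 0) (3 * Lsum a); first by exists o3.
case/negP: ai_nz; apply/eqP; move: i; apply: ord4P;
  by rewrite Lsum4 in L_ge0 a0 a1 a2 a3; lia.
Qed.

Lemma exceptional_nonneg_Lsum_Smx (u : quad) : exceptional_nonneg u ->
  exists i j, Lsum (Smx i *m u) < 0 < Lsum (Smx j *m u).
Proof.
move=> /exceptional_nonneg_top[i ui_gt0 /andP[L_ge0 L_le_ui]].
have [j below_j] := exists_coord_lt_3Lsum_div4 _ _ (lt0r_neq0 ui_gt0) L_ge0.
by exists i, j; rewrite !Lsum_Smx; apply/andP; split; lia.
Qed.

Lemma exceptional_nonneg_Hsq_QD (u : quad) : exceptional_nonneg u ->
  1 <= Hsq u <= QD u.
Proof.
move=> /exceptional_nonneg_top[i ui_gt0 /andP[L_ge0 L_le_ui]].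
have ui2_le := sqr_coord_le_Hsq u i.
have L2_le_ui2 : Lsum u ^+ 2 <= u i 0 ^+ 2 by rewrite !expr2 ler_pM.
have ui2_ge1 : 1 <= u i 0 ^+ 2 by rewrite expr2; nia.
by rewrite QD_Hsq_Lsum; apply/andP; split; lia.
Qed.

Lemma exceptional_cases (a : quad) :
  exceptional a -> exceptional_nonneg a \/ exceptional_nonneg (- a).
Proof. by rewrite /exceptional; case: ifP => _; [left | case=> _; right]. Qed.

Lemma exceptional_Lsum_Smx (a : quad) : exceptional a ->
  exists i j, Lsum (Smx i *m a) < 0 < Lsum (Smx j *m a).
Proof.
case/exceptional_cases; first exact: exceptional_nonneg_Lsum_Smx.
move=> /exceptional_nonneg_Lsum_Smx[i [j]]; rewrite !mulmxN !LsumN.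
by rewrite oppr_lt0 oppr_gt0 => /andP[? ?]; exists j, i; apply/andP.
Qed.

Lemma exceptional_Hsq_QD (a : quad) : exceptional a -> 1 <= Hsq a <= QD a.
Proof.
case/exceptional_cases => /exceptional_nonneg_Hsq_QD //.
by rewrite HsqN QDN.
Qed.

Lemma bounded_quads_finite (k : int) :
  exists s : seq quad, forall a : quad, (forall i, `|a i 0| <= k) -> a \in s.
Proof.
exists [seq \col_i ((g i : nat)%:Z - k) | g : {ffun 'I_4 -> 'I_(2 * absz k).+1}].
move=> a a_bounded; apply/imageP.
exists [ffun i => inord (absz (a i 0 + k))] => //.
(* [colP] exposes [a i 0] at a convertible but syntactically different type,
   so it is generalized before calling [lia]. *)
apply/colP => i; rewrite !mxE ffunE inordK;
  by have := a_bounded i; move: (a i 0) => x; lia.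
Qed.

Definition exc_quad_neg : quad := \col_i [:: -1; -1; 0; 1]`_i.
Definition exc_quad_pos : quad := \col_i [:: 1; -1; 0; 1]`_i.

Lemma Smx0_exc_quad_neg : Smx o0 *m exc_quad_neg = exc_quad_pos.
Proof. by apply/colP; apply: ord4P; rewrite SmxE Lsum4 !mxE. Qed.

Lemma exceptional_exc_quad_pos : exceptional exc_quad_pos.
Proof.
have L_eq1 : Lsum exc_quad_pos = 1 by rewrite Lsum4 !mxE.
rewrite /exceptional L_eq1; split.
  by apply/reducedP; apply: ord4P; rewrite L_eq1 !mxE.
by rewrite L_eq1 /sorted_coords enum_ord4 /= !mxE.
Qed.

Lemma exceptional_exc_quad_neg : exceptional exc_quad_neg.
Proof.
have L_eqN1 : Lsum exc_quad_neg = -1 by rewrite Lsum4 !mxE.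
rewrite /exceptional L_eqN1 /=; split; last split.
- by apply/reducedP; apply: ord4P; rewrite L_eqN1 !mxE.
- by apply/reducedP; apply: ord4P; rewrite LsumN L_eqN1 !mxE.
- by rewrite LsumN L_eqN1 /sorted_coords enum_ord4 /= !mxE.
Qed.

Theorem theorem3p4 :
  (* (1) *)
  (forall v : quad, v != 0 ->
     (exists w, in_Aorbit v w /\ exceptional w) ->
     exists v1 v2, in_Aorbit v v1 /\ in_Aorbit v v2 /\
                   0 < Lsum v1 /\ Lsum v2 < 0) /\
  (* (2) *)
  (exists v : quad, v != 0 /\
     exists w1 w2, w1 != w2 /\ in_Aorbit v w1 /\ in_Aorbit v w2 /\
                   exceptional w1 /\ exceptional w2) /\
  (* (3) *)
  (forall (k : int) (a : quad), exceptional a -> QD a = k -> 1 <= k) /\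
  (forall k : int, 1 <= k ->
     (exists s : seq quad, forall a, exceptional a -> QD a = k -> a \in s) /\
     (forall a : quad, exceptional a -> QD a = k -> Hsq a <= 2 * k ^+ 2)).
Proof.
split.
  move=> v _ [w [v_w /exceptional_Lsum_Smx[i [j /andP[Li_lt0 Lj_gt0]]]]].
  by exists (Smx j *m w), (Smx i *m w); do !split => //; apply: in_Aorbit_Smx.
split.
  exists exc_quad_neg; split; first by apply/eqP => /colP/(_ o0); rewrite !mxE.
  exists exc_quad_neg, exc_quad_pos.
  split; first by apply/eqP => /colP/(_ o0); rewrite !mxE.
  split; first exact: in_Aorbit_refl.
  split; first by rewrite -Smx0_exc_quad_neg; apply/in_Aorbit_Smx/in_Aorbit_refl.
  by split; [exact: exceptional_exc_quad_neg | exact: exceptional_exc_quad_pos].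
split.
  by move=> k a /exceptional_Hsq_QD/andP[H_ge1 H_le_QD] <-; apply: le_trans H_le_QD.
move=> k k_ge1; split.
  have [s s_bounded] := bounded_quads_finite k.
  exists s => a /exceptional_Hsq_QD/andP[_ H_le_QD] QD_k; apply: s_bounded => i.
  by rewrite -QD_k (le_trans (norm_coord_le_Hsq a i)).
move=> a /exceptional_Hsq_QD/andP[_ H_le_QD] QD_k.
by rewrite -QD_k in k_ge1 *; rewrite expr2; nia.
Qed.
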